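(* Let $f:[0,1]\to\mathbb{R}$ with $f(0),f(1)\in\mathbb{Z}$. Set $\Phi(x):=6\big(x\ln x+(1-x)\ln(1-x)\big)$. (a) If $f(x)-\Phi(x)$ is convex on $[0,1]$, then $\widetilde{B}_n(f)$ and $\widehat{B}_n(f)$ are convex on $[0,1]$ for all $n\in\mathbb{N}_+$. (b) If $f(x)+\Phi(x)$ is concave on $[0,1]$, then $\widetilde{B}_n(f)$ and $\widehat{B}_n(f)$ are concave on $[0,1]$ for all $n\in\mathbb{N}_+$.
   Context: $\Phi$ is taken with the usual continuous extension $0\ln 0=0$ at $x=0,1$. For $n\in\mathbb{N}_+$ and $f:[0,1]\to\mathbb{R}$, define $\widetilde{B}_n(f)(x):=\sum_{k=0}^n \left[f\left(\frac{k}{n}\right)\binom{n}{k}\right]x^k(1-x)^{n-k}$, where $[\alpha]$ is the largest integer $\le\alpha$, and $\widehat{B}_n(f)(x):=\sum_{k=0}^n \left\langle f\left(\frac{k}{n}\right)\binom{n}{k}\right\rangle x^k(1-x)^{n-k}$, where $\langle\alpha\rangle$ is the integer nearest to $\alpha$ (when $\alpha$ is a half-integer, $\langle\alpha\rangle$ may be either neighbouring integer, chosen arbitrarily; the result holds for any such choice). *)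

From mathcomp Require Import all_boot all_order all_algebra.
From mathcomp Require Import all_classical all_reals all_analysis.
Set Implicit Arguments. Unset Strict Implicit. Unset Printing Implicit Defensive.
Import Order.TTheory GRing.Theory Num.Theory.
Local Open Scope ring_scope.

Section Defs.
Variable R : realType.

Definition xlnx (x : R) : R := if x == 0 then 0 else x * ln x.

Definition Phi (x : R) : R := 6 * (xlnx x + xlnx (1 - x)).

Definition convex01 (g : R -> R) : Prop :=
  forall x y t : R, 0 <= x <= 1 -> 0 <= y <= 1 -> 0 <= t <= 1 ->
    g (t * x + (1 - t) * y) <= t * g x + (1 - t) * g y.
Definition concave01 (g : R -> R) : Prop :=
  forall x y t : R, 0 <= x <= 1 -> 0 <= y <= 1 -> 0 <= t <= 1 ->
    t * g x + (1 - t) * g y <= g (t * x + (1 - t) * y).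

Definition Btilde (n : nat) (f : R -> R) (x : R) : R :=
  \sum_(k < n.+1)
    (Num.floor (f (k%:R / n%:R) * 'C(n, k)%:R))%:~R * x ^+ k * (1 - x) ^+ (n - k).

(* \widehat{B}_n(f) with integer coefficients c k; the theorem requires each
   c k to be a nearest integer to f(k/n) C(n,k) (ties chosen arbitrarily) *)
Definition Bhat_with (n : nat) (c : nat -> int) (x : R) : R :=
  \sum_(k < n.+1) (c k)%:~R * x ^+ k * (1 - x) ^+ (n - k).

Definition nearest_int_choice (n : nat) (f : R -> R) (c : nat -> int) : Prop :=
  forall k, (k <= n)%N -> `|(c k)%:~R - f (k%:R / n%:R) * 'C(n, k)%:R| <= 2^-1.

End Defs.
Arguments Bhat_with {R} n c x.
Arguments nearest_int_choice {R} n f c.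

(* Write c_k for the chosen integer near v_k = f(k/n) C(n,k); the polynomial is
   the Bernstein polynomial with coefficients d_k = c_k / C(n,k), whose second
   derivative is n(n-1) times the Bernstein polynomial of the second
   differences of d, so it suffices that these be nonnegative.  Split
   d_k = f(k/n) + e_k / C(n,k).  Convexity of f - Phi bounds the second
   difference of f at k/n below by that of Phi, which is at least
   6 / ((k+1)(n-k-1)) by the inequality (1+t) ln(1+t) + (1-t) ln(1-t) >= t^2.
   The errors e_j lie in a window [b, b+1] with -1 <= b <= 0 (b = -1 for the
   floor, b = -1/2 for a nearest integer) and vanish at j = 0, n because f(0)
   and f(1) are integers; elsewhere C(n,j) >= (k+1)(n-k-1)/2 for |j - (k+1)| <= 1,
   so the three terms e_j / C(n,j) lie in a window of width 2 / ((k+1)(n-k-1))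
   and their second difference is at least -4 / ((k+1)(n-k-1)).  The concave
   case is the convex one applied to -f and -c. *)

From mathcomp Require Import all_boot all_order all_algebra.
From mathcomp Require Import all_classical all_reals all_analysis.
From mathcomp Require Import ring lra zify.

Set Implicit Arguments.
Unset Strict Implicit.
Unset Printing Implicit Defensive.

Import Order.TTheory GRing.Theory Num.Theory numFieldNormedType.Exports.
Local Open Scope ring_scope.

Section BernsteinPolynomials.
Variable R : comNzRingType.

Definition bernstein_basis (n k : nat) : {poly R} :=
  'C(n, k)%:R *: ('X^k * (1 - 'X) ^+ (n - k)).

Definition bernstein (n : nat) (d : nat -> R) : {poly R} :=
  \sum_(k < n.+1) d k *: bernstein_basis n k.

Lemma bernstein_basis_small n k : (n < k)%N -> bernstein_basis n k = 0.
Proof. by move=> lt_nk; rewrite /bernstein_basis bin_small // scale0r. Qed.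

Lemma deriv_bernstein_basis0 n :
  (bernstein_basis n.+1 0)^`() = - (n.+1%:R *: bernstein_basis n 0).
Proof.
rewrite /bernstein_basis !bin0 !scale1r !expr0 !mul1r !subn0.
by rewrite deriv_exp derivB derivC derivX sub0r /= mulN1r mulNrn scaler_nat.
Qed.

Lemma deriv_bernstein_basisS n k :
  (bernstein_basis n.+1 k.+1)^`() =
  n.+1%:R *: (bernstein_basis n k - bernstein_basis n k.+1).
Proof.
rewrite /bernstein_basis subSS derivZ derivM derivXn deriv_exp derivB derivC.
rewrite derivX sub0r -subnS -!mul_polyC !polyC_natr.
have binS_diag : 'C(n.+1, k.+1)%:R * k.+1%:R = n.+1%:R * 'C(n, k)%:R :> {poly R}.
  by rewrite -!natrM mulnC -mul_bin_diag.
have binS_down : 'C(n.+1, k.+1)%:R * (n - k)%:R = n.+1%:R * 'C(n, k.+1)%:R :> {poly R}.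
  by rewrite -!natrM mulnC mul_bin_down.
rewrite -[_ *+ k.+1]mulr_natr -[_ *+ (n - k)]mulr_natr /= exprSr.
set A := 'X^k; set B := (1 - 'X) ^+ (n - k); set B' := (1 - 'X) ^+ (n - k.+1).
transitivity ('C(n.+1, k.+1)%:R * k.+1%:R * (A * B)
  - 'C(n.+1, k.+1)%:R * (n - k)%:R * (A * 'X * B') : {poly R}); first by ring.
by rewrite binS_diag binS_down; ring.
Qed.

Lemma deriv_bernstein0 d : (bernstein 0 d)^`() = 0.
Proof.
rewrite /bernstein big_ord1 /bernstein_basis bin0 subnn !expr0 mul1r scale1r.
by rewrite -polyC1 derivZ derivC scaler0.
Qed.

Lemma deriv_bernstein n d :
  (bernstein n.+1 d)^`() = n.+1%:R *: bernstein n (fun k => d k.+1 - d k).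
Proof.
have shift : \sum_(k < n.+1) d k *: bernstein_basis n k =
    d 0%N *: bernstein_basis n 0 + \sum_(k < n.+1) d k.+1 *: bernstein_basis n k.+1.
  rewrite big_ord_recl [in RHS]big_ord_recr /=.
  by rewrite (@bernstein_basis_small n n.+1) // scaler0 addr0.
rewrite /bernstein raddf_sum big_ord_recl /= derivZ deriv_bernstein_basis0.
under eq_bigr do rewrite derivZ deriv_bernstein_basisS scalerA mulrC -scalerA.
rewrite -scaler_sumr scalerN scalerA mulrC -scalerA -scalerN -scalerDr.
congr (_ *: _).
under [in LHS]eq_bigr do rewrite scalerBr.
under [in RHS]eq_bigr do rewrite scalerBl.
by rewrite !sumrB shift opprD addrCA.
Qed.

Lemma horner_bernstein n d x :
  (bernstein n d).[x] =
  \sum_(k < n.+1) d k * ('C(n, k)%:R * x ^+ k * (1 - x) ^+ (n - k)).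
Proof.
rewrite /bernstein horner_sum; apply: eq_bigr => k _.
by rewrite !hornerZ hornerM hornerXn horner_exp hornerD hornerN hornerX hornerC !mulrA.
Qed.

End BernsteinPolynomials.

Lemma bernstein_ge0 (R : numDomainType) n (d : nat -> R) x : 0 <= x <= 1 ->
  (forall k, (k <= n)%N -> 0 <= d k) -> 0 <= (bernstein n d).[x].
Proof.
move=> /andP[x_ge0 x_le1] d_ge0; rewrite horner_bernstein; apply: sumr_ge0 => k _.
apply: mulr_ge0; first by apply: d_ge0; rewrite -ltnS.
by rewrite !mulr_ge0 ?exprn_ge0 ?subr_ge0.
Qed.

Lemma poly_convex01 (R : realType) (p : {poly R}) :
  (forall z, 0 < z < 1 -> 0 <= p^`()^`().[z]) -> convex01 (horner p).
Proof.
have D1_horner (q : {poly R}) : 'D_1 (horner q) = horner q^`().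
  by apply/funext => z; rewrite -derive1E -derivE.
move=> p''_ge0 x y t x01 y01 t01.
wlog le_xy : x y t x01 y01 t01 / x <= y.
  move=> convex_le; have [|lt_yx] := leP x y; first exact: convex_le.
  have t'01 : 0 <= 1 - t <= 1 by case/andP: t01 => *; apply/andP; split; lra.
  have := convex_le y x (1 - t) y01 x01 t'01 (ltW lt_yx).
  by rewrite subKr addrC [X in _ <= X]addrC.
case/andP: t01 => t_ge0 t_le1.
have := @second_derivative_convex R (horner p) x y _ _ _ _ _ (Itv01 t_ge0 t_le1) le_xy.
rewrite !convRE /=; apply.
- move=> z /andP[lt_xz lt_zy]; rewrite D1_horner -derive1E -derivE; apply: p''_ge0.
  by case/andP: x01; case/andP: y01 => *; apply/andP; split; lra.
- exact/cvg_at_left_filter/continuous_horner.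
- exact/cvg_at_right_filter/continuous_horner.
- by move=> z _; apply: derivable_horner.
- by move=> z _; rewrite D1_horner; apply: derivable_horner.
Qed.

Lemma bernstein_convex (R : realType) n (d : nat -> R) :
  (forall k, (k.+2 <= n)%N -> 0 <= d k - 2 * d k.+1 + d k.+2) ->
  convex01 (horner (bernstein n d)).
Proof.
move=> dd_ge0; apply: poly_convex01 => z /andP[z_gt0 z_lt1].
case: n dd_ge0 => [|n] dd_ge0; first by rewrite deriv_bernstein0 deriv0 horner0.
rewrite deriv_bernstein derivZ.
case: n dd_ge0 => [|n] dd_ge0; first by rewrite deriv_bernstein0 scaler0 horner0.
rewrite deriv_bernstein scalerA hornerZ mulr_ge0 // bernstein_ge0 ?ltW //.
by move=> k le_kn; have := dd_ge0 k le_kn; lra.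
Qed.

Lemma is_derive1_comp (R : realFieldType) (f g : R -> R) (x df dg : R) :
  is_derive x 1 f df -> is_derive (f x) 1 g dg -> is_derive x 1 (g \o f) (dg * df).
Proof.
move=> [f_derivable f'x] [g_derivable g'fx].
have := derive1_comp f_derivable g_derivable.
rewrite !derive1E f'x g'fx => gf'x.
apply: DeriveDef gf'x.
by apply/derivable1_diffP; apply: differentiable_comp; apply/derivable1_diffP.
Qed.

Section LogInequalities.
Variable R : realType.

Lemma is_derive1_lnf (f : R -> R) (x df : R) :
  is_derive x 1 f df -> 0 < f x -> is_derive x 1 (@ln R \o f) (df / f x).
Proof.
move=> f_df fx_gt0; rewrite mulrC.
exact: is_derive1_comp f_df (is_derive1_ln fx_gt0).
Qed.

Lemma is_derive_ge0_le (g g' : R -> R) (a b : R) : a <= b ->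
  (forall s, a <= s <= b -> is_derive s 1 g (g' s)) ->
  (forall s, a < s < b -> 0 <= g' s) -> g a <= g b.
Proof.
move=> le_ab g_g' g'_ge0.
have g_derivable s : s \in `[a, b] -> derivable g s 1.
  by rewrite in_itv /= => /g_g' [].
apply: (@ger0_derive1_ndecr R g a b) => //.
- move=> s; rewrite in_itv /= => /andP[? ?].
  by apply: g_derivable; rewrite in_itv /=; apply/andP; split; lra.
- move=> s; rewrite in_itv /= => s_ab; rewrite derive1E.
  have [|_ ->] := g_g' s; last exact: g'_ge0.
  by case/andP: s_ab => ? ?; apply/andP; split; lra.
- exact: derivable_within_continuous.
Qed.

Lemma ln1D_sub_ln1B_ge (t : R) : 0 <= t < 1 -> 2 * t <= ln (1 + t) - ln (1 - t).
Proof.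
move=> /andP[t_ge0 t_lt1].
pose H : R -> R := (@ln R \o (cst 1 + id)) - (@ln R \o (cst 1 - id)) - 2 *: id.
have H_val s : H s = ln (1 + s) - ln (1 - s) - 2 * s by [].
have H'_ge0 s : 0 < s < t -> 0 <= (1 + s)^-1 + (1 - s)^-1 - 2.
  move=> /andP[s_gt0 s_lt_t].
  have : 1 - s <= (1 + s)^-1 by rewrite -div1r ler_pdivlMr; nra.
  have : 1 + s <= (1 - s)^-1 by rewrite -div1r ler_pdivlMr; nra.
  lra.
have H_derive s : 0 <= s <= t -> is_derive s 1 H ((1 + s)^-1 + (1 - s)^-1 - 2).
  move=> /andP[s_ge0 s_le_t].
  have d1D := is_deriveD (is_derive_cst (1 : R) s 1) (is_derive_id s 1).
  have d1B := is_deriveB (is_derive_cst (1 : R) s 1) (is_derive_id s 1).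
  have sD : 0 < 1 + s by lra.
  have sB : 0 < 1 - s by lra.
  have := is_deriveB (is_deriveB (is_derive1_lnf d1D sD) (is_derive1_lnf d1B sB))
    (is_deriveZ 2 (is_derive_id s 1)).
  move=> /is_derive_eq; apply.
  by rewrite /= add0r sub0r mul1r mulN1r opprK; congr (_ - _); apply: mulr1.
have := is_derive_ge0_le t_ge0 H_derive H'_ge0.
by rewrite !H_val addr0 subr0 ln1 subrr; lra.
Qed.

Lemma sqr_le_mul_ln1D_ln1B (t : R) : 0 <= t < 1 ->
  t ^+ 2 <= (1 + t) * ln (1 + t) + (1 - t) * ln (1 - t).
Proof.
move=> /andP[t_ge0 t_lt1].
pose G : R -> R := (cst 1 + id) * (@ln R \o (cst 1 + id)) +
  (cst 1 - id) * (@ln R \o (cst 1 - id)) - id * id.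
have G_val s : G s = (1 + s) * ln (1 + s) + (1 - s) * ln (1 - s) - s * s by [].
have G'_ge0 s : 0 < s < t -> 0 <= ln (1 + s) - ln (1 - s) - 2 * s.
  move=> /andP[? ?]; rewrite subr_ge0 ln1D_sub_ln1B_ge //.
  by apply/andP; split; lra.
have G_derive s : 0 <= s <= t -> is_derive s 1 G (ln (1 + s) - ln (1 - s) - 2 * s).
  move=> /andP[s_ge0 s_le_t].
  have d1D := is_deriveD (is_derive_cst (1 : R) s 1) (is_derive_id s 1).
  have d1B := is_deriveB (is_derive_cst (1 : R) s 1) (is_derive_id s 1).
  have sD : 0 < 1 + s by lra.
  have sB : 0 < 1 - s by lra.
  have := is_deriveB (is_deriveD (is_deriveM d1D (is_derive1_lnf d1D sD))
    (is_deriveM d1B (is_derive1_lnf d1B sB)))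
    (is_deriveM (is_derive_id s 1) (is_derive_id s 1)).
  move=> /is_derive_eq; apply.
  rewrite -[(cst 1 + id) s]/(1 + s) -[(cst 1 - id) s]/(1 - s) /GRing.scale /=.
  rewrite -[ln ((cst 1 + id) s)]/(ln (1 + s)) -[ln ((cst 1 - id) s)]/(ln (1 - s)).
  by field; rewrite (gt_eqF sD) (gt_eqF sB).
have := is_derive_ge0_le t_ge0 G_derive G'_ge0.
by rewrite !G_val addr0 subr0 ln1 expr2; lra.
Qed.

Lemma ln2_ge_half : 1 / 2 <= ln (2 : R).
Proof.
have := @le_ln1Dx R (- (1 / 2)) ltac:(lra).
have -> : 1 + - (1 / 2) = (2 : R)^-1 by field.
by rewrite lnV ?posrE //; lra.
Qed.

Lemma xlnx_second_diff_ge (u d : R) : 0 < d <= u ->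
  d ^+ 2 / u <= xlnx (u - d) - 2 * xlnx u + xlnx (u + d).
Proof.
move=> /andP[d_gt0 le_du]; have u_gt0 : 0 < u by lra.
have xlnxE v : 0 < v -> xlnx v = v * ln v by move=> v_gt0; rewrite /xlnx gt_eqF.
have [lt_du|le_ud] := ltP d u; last first.
  (* u - d = 0 is out of reach of [sqr_le_mul_ln1D_ln1B]; the bound reads 2 ln 2 >= 1 *)
  have -> : d = u by lra.
  rewrite subrr /xlnx eqxx (gt_eqF u_gt0) gt_eqF; last lra.
  have -> : u + u = 2 * u by ring.
  rewrite lnM ?posrE // expr2 mulfK ?gt_eqF //.
  by have := ln2_ge_half; nra.
pose t := d / u.
have t_gt0 : 0 < t by rewrite divr_gt0.
have t_lt1 : t < 1 by rewrite ltr_pdivrMr // mul1r.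
have uBd : u - d = u * (1 - t) by rewrite /t; field; rewrite gt_eqF.
have uDd : u + d = u * (1 + t) by rewrite /t; field; rewrite gt_eqF.
have d2u : d ^+ 2 / u = u * t ^+ 2 by rewrite /t; field; rewrite gt_eqF.
rewrite uBd uDd d2u !xlnxE; [|nra|nra|lra].
rewrite !lnM ?posrE //; [|lra|lra].
have := @sqr_le_mul_ln1D_ln1B t ltac:(apply/andP; split; lra).
nra.
Qed.

End LogInequalities.

Lemma Phi_second_diff_ge (R : realType) (u d : R) : 0 < d -> d <= u -> d <= 1 - u ->
  6 * d ^+ 2 / (u * (1 - u)) <= Phi (u - d) - 2 * Phi u + Phi (u + d).
Proof.
move=> d_gt0 le_du le_d1u.
have := @xlnx_second_diff_ge R u d ltac:(apply/andP; split; lra).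
have := @xlnx_second_diff_ge R (1 - u) d ltac:(apply/andP; split; lra).
have split_frac : d ^+ 2 / (u * (1 - u)) = d ^+ 2 / u + d ^+ 2 / (1 - u).
  by field; apply/andP; split; apply/eqP; lra.
rewrite /Phi -mulrA split_frac.
have -> : 1 - (u - d) = 1 - u + d by ring.
have -> : 1 - (u + d) = 1 - u - d by ring.
lra.
Qed.

Lemma leq_mul_bin n j : (0 < j < n)%N -> (j.+1 * (n - j).+1 <= 2 * 'C(n, j))%N.
Proof.
suff bin_lb a b : (a.+2 * b.+2 <= 2 * 'C(a.+1 + b.+1, a.+1))%N.
  case/andP=> j_gt0 lt_jn; have := bin_lb j.-1 (n - j).-1.
  by rewrite !prednK ?subn_gt0 // subnKC // ltnW.
elim: a b => [|a IHa] b; first by rewrite add1n bin1; lia.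
elim: b => [|b IHb]; first by rewrite addn1 binSn; lia.
have IHab := IHa b.+1.
rewrite addnS binS [in 'C(_, a.+1)]addSnnS.
nia.
Qed.

Lemma concave01_convex01N (R : realType) (g : R -> R) :
  concave01 g <-> convex01 (fun x => - g x).
Proof. by split=> g_cvx x y t x01 y01 t01; have := g_cvx x y t x01 y01 t01; lra. Qed.

Lemma convex01_midpoint (R : realType) (g : R -> R) x y : convex01 g ->
  0 <= x <= 1 -> 0 <= y <= 1 -> 2 * g ((x + y) / 2) <= g x + g y.
Proof.
move=> g_cvx x01 y01; have := g_cvx x y (1 / 2) x01 y01 ltac:(lra).
have -> : 1 / 2 * x + (1 - 1 / 2) * y = (x + y) / 2 by field.
lra.
Qed.

Lemma int_near_eq (R : realType) (x y : R) :
  x \is a Num.int -> y \is a Num.int -> `|x - y| < 1 -> x = y.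
Proof.
move=> x_int y_int lt_xy1; apply/eqP; rewrite -subr_eq0; apply/negPn/negP => xy_neq0.
by have := norm_intr_ge1 (rpredB x_int y_int) xy_neq0; lra.
Qed.

Section IntegerBernstein.
Variable R : realType.
Implicit Types (f : R -> R) (c : nat -> int) (b : R).

Definition bernstein_coef n f k : R := f (k%:R / n%:R) * 'C(n, k)%:R.

Definition bernstein_rounding n f b c : Prop :=
  [/\ forall k, (k <= n)%N -> b <= (c k)%:~R - bernstein_coef n f k <= b + 1,
      (c 0%N)%:~R = bernstein_coef n f 0 & (c n)%:~R = bernstein_coef n f n].

(* d^2 / (u (1 - u)) for u = (k + 1) / n and d = 1 / n *)
Definition second_diff_weight n k : R := ((k.+1)%:R * (n - k.+1)%:R)^-1.

Lemma bernstein_coef0 n f : bernstein_coef n f 0 = f 0.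
Proof. by rewrite /bernstein_coef mul0r bin0 mulr1. Qed.

Lemma bernstein_coefn n f : (0 < n)%N -> bernstein_coef n f n = f 1.
Proof.
by move=> n_gt0; rewrite /bernstein_coef divff ?pnatr_eq0 -?lt0n // binn mulr1.
Qed.

Lemma Bhat_withE n c :
  Bhat_with (R := R) n c = horner (bernstein n (fun k => (c k)%:~R / 'C(n, k)%:R)).
Proof.
apply/funext => x; rewrite horner_bernstein; apply: eq_bigr => k _.
have C_neq0 : ('C(n, k)%:R : R) != 0 by rewrite pnatr_eq0 -lt0n bin_gt0 -ltnS.
by rewrite !mulrA mulfVK.
Qed.

Lemma sample_second_diff_ge n f k : (k.+2 <= n)%N -> convex01 (fun x => f x - Phi x) ->
  6 * second_diff_weight n k <=
  f (k%:R / n%:R) - 2 * f (k.+1%:R / n%:R) + f (k.+2%:R / n%:R).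
Proof.
move=> lt_k2n f_cvx.
have grid01 j : (j <= n)%N -> 0 <= (j%:R / n%:R : R) <= 1.
  by move=> le_jn; rewrite divr_ge0 // ler_pdivrMr ?ltr0n ?mul1r ?ler_nat //; lia.
have := convex01_midpoint f_cvx (grid01 k (ltnW (ltnW lt_k2n))) (grid01 k.+2 lt_k2n).
rewrite /second_diff_weight natrB 1?ltnW // -[k.+2%:R]natr1 -[k.+1%:R]natr1.
have K2N : (k%:R : R) + 1 + 1 <= n%:R by rewrite !natr1 ler_nat.
have N_gt0 : (0 : R) < n%:R by rewrite ltr0n; lia.
have K_ge0 : (0 : R) <= k%:R by [].
set N : R := n%:R; set K : R := k%:R.
have mid : (K / N + (K + 1 + 1) / N) / 2 = (K + 1) / N by field; rewrite gt_eqF.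
have := @Phi_second_diff_ge R ((K + 1) / N) (1 / N).
have -> : (K + 1) / N - 1 / N = K / N by field; rewrite gt_eqF.
have -> : (K + 1) / N + 1 / N = (K + 1 + 1) / N by field; rewrite gt_eqF.
have -> : 1 - (K + 1) / N = (N - (K + 1)) / N by field; rewrite gt_eqF.
have -> : 6 * (1 / N) ^+ 2 / ((K + 1) / N * ((N - (K + 1)) / N)) =
          6 * ((K + 1) * (N - (K + 1)))^-1.
  by field; rewrite !gt_eqF //; lra.
rewrite divr_gt0 // !ler_pM2r ?invr_gt0 // mid.
lra.
Qed.

Lemma rounding_error_bound n f b c k j : (k.+2 <= n)%N -> (k <= j <= k.+2)%N ->
  -1 <= b <= 0 -> bernstein_rounding n f b c ->
  2 * b * second_diff_weight n k <= (c j)%:~R / 'C(n, j)%:R - f (j%:R / n%:R)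
    <= 2 * (b + 1) * second_diff_weight n k.
Proof.
move=> lt_k2n /andP[le_kj le_jk2] /andP[b_ge_m1 b_le0] [window c0 cn].
set w := second_diff_weight n k; set e := (c j)%:~R - bernstein_coef n f j.
have le_jn : (j <= n)%N by lia.
have C_gt0 : (0 : R) < 'C(n, j)%:R by rewrite ltr0n bin_gt0.
have KM_gt0 : (0 : R) < k.+1%:R * (n - k.+1)%:R.
  by rewrite -natrM ltr0n muln_gt0; lia.
have w_gt0 : 0 < w by rewrite invr_gt0.
have -> : (c j)%:~R / 'C(n, j)%:R - f (j%:R / n%:R) = e / 'C(n, j)%:R.
  by rewrite /e /bernstein_coef; field; rewrite gt_eqF.
(* At j = 0 and j = n the binomial coefficient 1 is too small for the bound
   below; there the rounding is exact instead. *)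
have [/orP[]/eqP j_end|j_inner] := boolP ((j == 0) || (j == n))%N.
- by rewrite /e j_end c0 subrr mul0r; apply/andP; split; nra.
- by rewrite /e j_end cn subrr mul0r; apply/andP; split; nra.
have invC_le : 'C(n, j)%:R^-1 <= 2 * w.
  have : (k.+1 * (n - k.+1) <= 2 * 'C(n, j))%N.
    apply: leq_trans (leq_mul_bin _); last by move: j_inner; rewrite negb_or; lia.
    by apply: leq_mul; lia.
  rewrite -(ler_nat R) !natrM => KM_le.
  have KMw : k.+1%:R * (n - k.+1)%:R * w = 1 by rewrite mulfV ?gt_eqF.
  by rewrite -div1r ler_pdivrMr //; nra.
have /andP[? ?] : b <= e <= b + 1 by exact: window.
have invC_gt0 : (0 : R) < 'C(n, j)%:R^-1 by rewrite invr_gt0.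
by apply/andP; split; nra.
Qed.

Lemma Bhat_with_convex n f b c : convex01 (fun x => f x - Phi x) ->
  -1 <= b <= 0 -> bernstein_rounding n f b c -> convex01 (Bhat_with (R := R) n c).
Proof.
move=> f_cvx b_bounds f_c; rewrite Bhat_withE; apply: bernstein_convex => k lt_k2n.
have err j (le_kjk2 : (k <= j <= k.+2)%N) :=
  rounding_error_bound lt_k2n le_kjk2 b_bounds f_c.
have /andP[? ?] := err k ltac:(lia).
have /andP[? ?] := err k.+1 ltac:(lia).
have /andP[? ?] := err k.+2 ltac:(lia).
have := sample_second_diff_ge lt_k2n f_cvx.
lra.
Qed.

Lemma Bhat_with_concave n f b c : concave01 (fun x => f x + Phi x) ->
  -1 <= b <= 0 -> bernstein_rounding n f b c -> concave01 (Bhat_with (R := R) n c).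
Proof.
move=> f_ccv b_bounds [window c0 cn]; apply/concave01_convex01N.
have -> : (fun x : R => - Bhat_with n c x) = Bhat_with n (fun k => - c k).
  apply/funext => x; rewrite /Bhat_with -sumrN.
  by apply: eq_bigr => k _; rewrite intrN !mulNr.
have coefN k : bernstein_coef n (fun x => - f x) k = - bernstein_coef n f k.
  by rewrite /bernstein_coef mulNr.
apply: (@Bhat_with_convex _ (fun x => - f x) (- 1 - b)).
- move/concave01_convex01N: f_ccv => Nf_cvx x y t x01 y01 t01.
  by have := Nf_cvx x y t x01 y01 t01; rewrite !opprD.
- by case/andP: b_bounds => *; apply/andP; split; lra.
- split=> [k le_kn||]; rewrite ?coefN intrN ?c0 ?cn //.
  by have /andP[? ?] := window k le_kn; apply/andP; split; lra.
Qed.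

Lemma floor_rounding n f : (0 < n)%N -> f 0 \is a Num.int -> f 1 \is a Num.int ->
  bernstein_rounding n f (-1) (fun k => Num.floor (bernstein_coef n f k)).
Proof.
move=> n_gt0 f0_int f1_int; split.
- move=> k _; have := floor_le (bernstein_coef n f k).
  have := floorD1_gt (bernstein_coef n f k); rewrite intrD.
  by move=> *; apply/andP; split; lra.
- by rewrite bernstein_coef0 floorK.
- by rewrite bernstein_coefn // floorK.
Qed.

Lemma nearest_rounding n f c : (0 < n)%N -> f 0 \is a Num.int -> f 1 \is a Num.int ->
  nearest_int_choice n f c -> bernstein_rounding n f (- 2^-1) c.
Proof.
move=> n_gt0 f0_int f1_int c_near.
have exact_at k : (k <= n)%N -> bernstein_coef n f k \is a Num.int ->
    (c k)%:~R = bernstein_coef n f k.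
  move=> le_kn coef_int; apply: int_near_eq (intr_int _ _) coef_int _.
  by have := c_near k le_kn; lra.
split.
- move=> k le_kn; have /ler_normlP[? ?] := c_near k le_kn.
  by rewrite /bernstein_coef; apply/andP; split; lra.
- by apply: exact_at; rewrite // bernstein_coef0.
- by apply: exact_at; rewrite // bernstein_coefn.
Qed.

End IntegerBernstein.

Theorem theorem1p9 (R : realType) (f : R -> R) :
  f 0 \is a Num.int -> f 1 \is a Num.int ->
  (convex01 (fun x => f x - Phi x) ->
     forall n : nat, (0 < n)%N ->
       convex01 (Btilde n f) /\
       (forall c : nat -> int, nearest_int_choice n f c -> convex01 (Bhat_with (R:=R) n c)))
  /\
  (concave01 (fun x => f x + Phi x) ->
     forall n : nat, (0 < n)%N ->
       concave01 (Btilde n f) /\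
       (forall c : nat -> int, nearest_int_choice n f c -> concave01 (Bhat_with (R:=R) n c))).
Proof.
move=> f0_int f1_int.
have floor_b : -1 <= (-1 : R) <= 0 by apply/andP; split; lra.
have nearest_b : -1 <= - (2^-1 : R) <= 0 by apply/andP; split; lra.
split=> [f_cvx|f_ccv] n n_gt0; split=> [|c c_near].
- exact: Bhat_with_convex f_cvx floor_b (floor_rounding n_gt0 f0_int f1_int).
- exact: Bhat_with_convex f_cvx nearest_b (nearest_rounding n_gt0 f0_int f1_int c_near).
- exact: Bhat_with_concave f_ccv floor_b (floor_rounding n_gt0 f0_int f1_int).
- exact: Bhat_with_concave f_ccv nearest_b (nearest_rounding n_gt0 f0_int f1_int c_near).
Qed.
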